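(* Let $X$ be a regular Hausdorff space and $\mathcal{P}$ a family of subsets of $X$. For $r\in\mathbb{N}$ and $P_1,\dots,P_r\in\mathcal{P}$ put $\langle P_1,\dots,P_r\rangle=\{K\in\mathcal{K}(X): K\subset \bigcup_{i=1}^r P_i,\ K\cap P_j\neq\emptyset\ (1\le j\le r)\}$ and $\mathcal{B}=\{\langle P_1,\dots,P_r\rangle: P_i\in\mathcal{P},\ r\in\mathbb{N}\}$. If $\mathcal{P}$ is compact-countable (resp. locally countable, locally finite, compact-finite) in $X$, then $\mathcal{B}$ is compact-countable (resp. locally countable, locally finite, compact-finite) in $\mathcal{K}(X)$. Moreover, if $\mathcal{P}$ consists of closed subsets of $X$, then $\mathcal{B}$ consists of closed subsets of $\mathcal{K}(X)$.
   Context: $\mathcal{K}(X)$ is the space of nonempty compact subsets of $X$ with the Vietoris topology, whose base consists of the sets $\langle U_1,\dots,U_k\rangle=\{K\in\mathcal{K}(X): K\subset\bigcup_{i=1}^k U_i,\ K\cap U_j\neq\emptyset \text{ for all } j\}$ with $U_i$ open in $X$. A family $\{X_\alpha\}$ of subsets of a space $Y$ is compact-countable (resp. compact-finite) if every compact $K\subset Y$ meets only countably (resp. finitely) many $X_\alpha$; locally countable (resp. locally finite) if every point has a neighborhood meeting only countably (resp. finitely) many $X_\alpha$. *)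

From HB Require Import structures.
From mathcomp Require Import all_boot all_order all_algebra.
From mathcomp Require Import all_classical all_reals all_analysis.
From Stdlib Require List.
Set Implicit Arguments. Unset Strict Implicit. Unset Printing Implicit Defensive.
Local Open Scope classical_set_scope.

Definition hyperspace (X : topologicalType) : Type :=
  {K : set X | compact K /\ K !=set0}.

HB.instance Definition _ (X : topologicalType) := gen_eqMixin (hyperspace X).
HB.instance Definition _ (X : topologicalType) := gen_choiceMixin (hyperspace X).

Definition vbox (X : topologicalType) (s : seq (set X)) : set (hyperspace X) :=
  [set K | (forall x, proj1_sig K x -> exists2 P, List.In P s & P x) /\
           (forall P, List.In P s -> proj1_sig K `&` P !=set0)].

Definition vindex (X : topologicalType) : Type := seq (set X).
HB.instance Definition _ (X : topologicalType) := gen_eqMixin (vindex X).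
HB.instance Definition _ (X : topologicalType) := gen_choiceMixin (vindex X).
HB.instance Definition _ (X : topologicalType) :=
  isPointed.Build (vindex X) ([::] : seq (set X)).

(* Vietoris topology: generated by the base of all <U_1,...,U_k>, U_i open *)
HB.instance Definition _ (X : topologicalType) :=
  @isSubBaseTopological.Build (hyperspace X) (vindex X)
    [set s : vindex X | forall U, List.In U s -> open U]
    (fun s : vindex X => vbox s).

Definition compact_countable (Y : topologicalType) (F : set (set Y)) :=
  forall K : set Y, compact K -> countable [set A | F A /\ A `&` K !=set0].
Definition compact_finite (Y : topologicalType) (F : set (set Y)) :=
  forall K : set Y, compact K -> finite_set [set A | F A /\ A `&` K !=set0].
Definition locally_countable (Y : topologicalType) (F : set (set Y)) :=
  forall y : Y, exists2 U, nbhs y U & countable [set A | F A /\ A `&` U !=set0].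
Definition locally_finite (Y : topologicalType) (F : set (set Y)) :=
  forall y : Y, exists2 U, nbhs y U & finite_set [set A | F A /\ A `&` U !=set0].

Definition vbox_family (X : topologicalType) (P : set (set X)) :
    set (set (hyperspace X)) :=
  [set vbox s | s in [set s : seq (set X) | s <> [::] /\ forall A, List.In A s -> P A]].

(** A box [<P_1, ..., P_r>] meets a family [C] of compacta only if every [P_i]
    meets the union of [C].  When [C] is compact in the Vietoris topology this
    union is a compact subset of [X], and the boxes meeting [C] are then indexed
    by lists drawn from the countably (finitely) many members of the family
    meeting that compactum.  For the local versions, cover a compactum [K] by
    finitely many open sets [W x] each meeting few members of the family: the
    open box [<\bigcup W x>] is a neighbourhood of [K], and every box meeting it
    is built from members meeting one of the [W x].  If the [P_i] are closed, a
    compactum outside [<P_1, ..., P_r>] either leaves [\bigcup P_i], and then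
    lies in the open set [<X, X \ \bigcup P_i>] disjoint from the box, or misses
    some [P_j], and then lies in the open set [<X \ P_j>]. *)

From HB Require Import structures.
From mathcomp Require Import all_boot all_order all_algebra finmap.
From mathcomp Require Import all_classical all_reals all_analysis.
From Stdlib Require List.
Local Open Scope classical_set_scope.

Lemma In_mem (T : eqType) (x : T) (s : seq T) : List.In x s <-> x \in s.
Proof.
elim: s => //= a s IH; rewrite inE; split.
  by move=> [->|/IH ->]; rewrite ?eqxx ?orbT.
by move=> /orP [/eqP ->|/IH]; [left|right].
Qed.

(** [compact_cover] is stated for pointed spaces; a nonempty set supplies the
    point. *)
Definition pointed_at {X : topologicalType} (x0 : X) : Type := X.
HB.instance Definition _ (X : topologicalType) (x0 : X) :=
  Topological.on (pointed_at x0).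
HB.instance Definition _ (X : topologicalType) (x0 : X) :=
  isPointed.Build (pointed_at x0) x0.

Lemma compact_coverP (X : topologicalType) (A : set X) :
  compact A <-> cover_compact A.
Proof.
have [->|/set0P [x0 _]] := eqVneq A set0.
  by split=> _; [move=> I D f _ _; exists fset0 | exact: compact0].
change (@compact (pointed_at x0) A <-> @cover_compact (pointed_at x0) A).
by rewrite compact_cover.
Qed.

Section Vietoris.
Context {X : topologicalType}.
Implicit Types (s : seq (set X)) (K : hyperspace X).

Lemma vbox_open s : (forall U, List.In U s -> open U) -> open (vbox s).
Proof.
move=> os; exists [set vbox s]; last by rewrite bigcup_set1.
move=> _ ->; exists [fset (s : vindex X)]%fset.
  by move=> i /fset1P ->; rewrite inE.
by rewrite set_fset1 bigcap_set1.
Qed.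

Lemma nbhs_vbox1 K (U : set X) :
  open U -> proj1_sig K `<=` U -> nbhs K (vbox [:: U]).
Proof.
move=> oU KU; apply: open_nbhs_nbhs; split.
  by apply: vbox_open => _ [<-|[]].
split; first by move=> x Kx; exists U; [left|exact: KU].
have [_ [x Kx]] := proj2_sig K.
by move=> _ [<-|[]]; exists x; split => //; exact: KU.
Qed.

Lemma closed_seq_cover s : (forall A, List.In A s -> closed A) ->
  closed [set x | exists2 A, List.In A s & A x].
Proof.
move=> cs; apply: closed_bigcup => //; apply/finite_seqP; exists s.
by apply/seteqP; split => A /In_mem.
Qed.

Lemma vbox_closed s : (forall A, List.In A s -> closed A) -> closed (vbox s).
Proof.
move=> cs; rewrite -[vbox s]setCK; apply: open_closedC; rewrite openE => K /= nsK.
have [Kmeets|] := pselect (forall A, List.In A s -> proj1_sig K `&` A !=set0).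
  have /existsNP [x /not_implyP [Kx nsx]] :
      ~ (forall x, proj1_sig K x -> exists2 A, List.In A s & A x).
    by move=> Ks; apply: nsK; split.
  set U := [set x | exists2 A, List.In A s & A x] in nsx.
  apply: (@filterS _ _ _ (vbox [:: setT; ~` U])).
    move=> L [_ LmeetsUC] [LU _].
    by have [y [Ly /(_ (LU y Ly))]] := LmeetsUC (~` U) (or_intror (or_introl erefl)).
  apply: open_nbhs_nbhs; split.
    apply: vbox_open => V [<-|[<-|[]]]; first exact: openT.
    by rewrite openC; apply: closed_seq_cover.
  split; first by move=> y _; exists setT => //; left.
  by move=> V [<-|[<-|[]]]; exists x.
move=> /existsNP [A /not_implyP [sA KA]].
apply: (@filterS _ _ _ (vbox [:: ~` A])).
  move=> L [LAC _] [_ /(_ A sA) [y [Ly Ay]]].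
  by have [V [<-|[]] /(_ Ay)] := LAC y Ly.
by apply: nbhs_vbox1; [rewrite openC; exact: cs | move=> x Kx Ax; apply: KA; exists x].
Qed.

Lemma compact_bigcup_hyperspace (C : set (hyperspace X)) :
  compact C -> compact (\bigcup_(K in C) proj1_sig K).
Proof.
move=> /compact_coverP cC; apply/compact_coverP => I D f fo Ccov.
have finite_subcover K : exists E : {fset I}, C K ->
    {subset E <= D} /\ proj1_sig K `<=` cover [set` E] f.
  have [CK|] := pselect (C K); last by exists fset0.
  have /compact_coverP cK := proj1 (proj2_sig K).
  have [E sED KE] := cK I D f fo (fun x Kx => Ccov x (ex_intro2 _ _ K CK Kx)).
  by exists E.
have [g hg] := choice finite_subcover.
pose V K := cover [set` g K] f.
have oV K : C K -> open (V K).
  move=> CK; apply: bigcup_open => i gKi.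
  by apply: fo; rewrite -in_setE; exact: (proj1 (hg K CK)).
have [E sEC CE] : finite_subset_cover C (fun K => vbox [:: V K]) C.
  apply: cC => [K CK|K CK]; first by apply: vbox_open => _ [<-|[]]; exact: oV.
  by exists K => //; apply: nbhs_singleton; apply: nbhs_vbox1 (oV K CK) _; case: (hg K CK).
exists (\bigcup_(K <- E) g K)%fset.
  move=> i /bigfcupP [K /andP [EK _] gKi].
  have CK : C K by rewrite -in_setE; exact: sEC.
  exact: (proj1 (hg K CK)).
move=> x [L CL Lx]; have [K EK [LV _]] := CE L CL.
have [_ [<-|[]] [i gKi fxi]] := LV x Lx.
by exists i => //=; apply/bigfcupP; exists K; rewrite ?EK.
Qed.

End Vietoris.

Definition lists_over {T : Type} (S : set T) : set (seq T) :=
  [set s | forall A, List.In A s -> S A].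

Lemma countable_lists_over (T : Type) (S : set T) :
  countable S -> countable (lists_over S).
Proof.
move/countable_injP => [f finj]; apply/countable_injP.
exists (fun s => choice.pickle (map f s)).
move=> s t; rewrite !inE => sS tS /(pcan_inj pickleK_inv).
elim: s t sS tS => [|a s IH] [|b t] //= sS tS [fab fst].
congr (_ :: _); last by apply: IH => // A As; [apply: sS|apply: tS]; right.
by apply: finj => //; rewrite inE; [apply: sS|apply: tS]; left.
Qed.

Lemma vbox_eq (X : topologicalType) (s t : seq (set X)) :
  (forall A, List.In A s <-> List.In A t) -> vbox s = vbox t.
Proof.
move=> st; apply/seteqP; split => K [Ks Kmeets]; split.
- by move=> x /Ks [A As Ax]; exists A => //; apply/st.
- by move=> A /st; exact: Kmeets.
- by move=> x /Ks [A As Ax]; exists A => //; apply/st.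
- by move=> A /st; exact: Kmeets.
Qed.

Lemma countable_vbox_lists (X : topologicalType) (S : set (set X)) :
  countable S -> countable (@vbox X @` lists_over S).
Proof.
move=> /countable_lists_over cS.
exact: sub_countable (card_image_le _ _) cS.
Qed.

(** [vbox s] only depends on which members of the finite set [S] occur in [s]. *)
Lemma finite_vbox_lists (X : topologicalType) (S : set (set X)) :
  finite_set S -> finite_set (@vbox X @` lists_over S).
Proof.
move/finite_fsetP => [B ->].
pose box (T : {set B}) := vbox [seq val A | A <- enum T].
apply: (@sub_finite_set _ _ (box @` setT)); last exact: finite_image finite_finset.
move=> _ [s sB <-]; exists (finset (fun A : B => val A \in s)) => //.
apply: vbox_eq => A; rewrite !In_mem; split.
  by move=> /mapP [a]; rewrite mem_enum inE => sa ->.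
move=> As; have AB : A \in B by apply: sB; exact/In_mem.
by apply/mapP; exists [` AB]%fset; rewrite ?mem_enum ?inE.
Qed.

Definition meeting {Y : topologicalType} (F : set (set Y)) (U : set Y) :=
  [set A | F A /\ A `&` U !=set0].

Lemma vbox_family_meets_sub (X : topologicalType) (P S : set (set X))
    (U : set (hyperspace X)) :
  (forall A K, P A -> U K -> proj1_sig K `&` A !=set0 -> S A) ->
  meeting (vbox_family P) U `<=` @vbox X @` lists_over S.
Proof.
move=> PS _ [[s [_ sP] <-] [K [[_ Kmeets] UK]]]; exists s => //.
by move=> A As; apply: PS (sP A As) UK (Kmeets A As).
Qed.

Section SmallFamilies.
Variable small : forall {T : Type}, set T -> Prop.
Hypothesis small_sub : forall {T} {A B : set T}, A `<=` B -> small B -> small A.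
Hypothesis small_bigcup : forall {I T} {D : set I} {F : I -> set T},
  finite_set D -> (forall i, D i -> small (F i)) -> small (\bigcup_(i in D) F i).
Hypothesis small_vbox_lists : forall {X : topologicalType} {S : set (set X)},
  small S -> small (@vbox X @` lists_over S).

Definition compact_small {Y : topologicalType} (F : set (set Y)) :=
  forall K : set Y, compact K -> small (meeting F K).

Definition locally_small {Y : topologicalType} (F : set (set Y)) :=
  forall y : Y, exists2 U, nbhs y U & small (meeting F U).

Variable X : topologicalType.
Implicit Type P : set (set X).

Lemma compact_small_vbox_family P :
  compact_small P -> compact_small (vbox_family P).
Proof.
move=> smallP C cC.
have := small_vbox_lists (smallP _ (compact_bigcup_hyperspace _ cC)).
apply: small_sub.
apply: vbox_family_meets_sub => A K PA CK [x [Kx Ax]].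
by split => //; exists x; split => //; exists K.
Qed.

Lemma locally_small_vbox_family P :
  locally_small P -> locally_small (vbox_family P).
Proof.
move=> smallP K.
have small_open_nbhs x : exists W, (open W /\ W x) /\ small (meeting P W).
  have [U + smallU] := smallP x; rewrite nbhsE => -[W [oW Wx] WU].
  exists W; split => //; apply: small_sub _ smallU.
  by move=> A [PA [y [Ay Wy]]]; split => //; exists y; split => //; exact: WU.
have [W hW] := choice small_open_nbhs.
have /compact_coverP cK := proj1 (proj2_sig K).
have [E _ KE] := cK X (proj1_sig K) W (fun x _ => proj1 (proj1 (hW x)))
  (fun x Kx => ex_intro2 _ _ x Kx (proj2 (proj1 (hW x)))).
have oEW : open (cover [set` E] W) by apply: bigcup_open => x _; case: (hW x) => [[]].
exists (vbox [:: cover [set` E] W]); first exact: nbhs_vbox1.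
have := small_vbox_lists (small_bigcup (finite_fset E) (fun x _ => proj2 (hW x))).
apply: small_sub.
apply: vbox_family_meets_sub => A L PA [LEW _] [y [Ly Ay]].
have [_ [<-|[]] [x Ex Wxy]] := LEW y Ly.
by exists x => //; split => //; exists y.
Qed.

End SmallFamilies.

Lemma countable_subset T (A B : set T) : A `<=` B -> countable B -> countable A.
Proof. by move=> AB; apply: sub_countable (subset_card_le AB). Qed.

Lemma finite_bigcup_countable I T (D : set I) (F : I -> set T) :
  finite_set D -> (forall i, D i -> countable (F i)) ->
  countable (\bigcup_(i in D) F i).
Proof. by move=> /finite_set_countable; exact: bigcup_countable. Qed.

Section VboxFamily.
Variables (X : topologicalType) (P : set (set X)).

Lemma compact_countable_vbox_family :
  compact_countable P -> compact_countable (vbox_family P).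
Proof.
exact: (@compact_small_vbox_family (@countable)
  countable_subset countable_vbox_lists).
Qed.

Lemma locally_countable_vbox_family :
  locally_countable P -> locally_countable (vbox_family P).
Proof.
exact: (@locally_small_vbox_family (@countable)
  countable_subset finite_bigcup_countable countable_vbox_lists).
Qed.

Lemma compact_finite_vbox_family :
  compact_finite P -> compact_finite (vbox_family P).
Proof.
exact: (@compact_small_vbox_family (@finite_set)
  sub_finite_set finite_vbox_lists).
Qed.

Lemma locally_finite_vbox_family :
  locally_finite P -> locally_finite (vbox_family P).
Proof.
exact: (@locally_small_vbox_family (@finite_set)
  sub_finite_set (@bigcup_finite) finite_vbox_lists).
Qed.

Lemma vbox_family_closed :
  (forall A, P A -> closed A) -> forall B, vbox_family P B -> closed B.
Proof. by move=> cP _ [s [_ sP] <-]; apply: vbox_closed => A /sP /cP. Qed.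

End VboxFamily.

Theorem proposition3p4 (X : topologicalType)
  (hX : hausdorff_space X) (rX : regular_space X) (P : set (set X)) :
  (compact_countable P -> compact_countable (vbox_family P)) /\
  (locally_countable P -> locally_countable (vbox_family P)) /\
  (locally_finite P -> locally_finite (vbox_family P)) /\
  (compact_finite P -> compact_finite (vbox_family P)) /\
  ((forall A, P A -> closed A) -> forall B, vbox_family P B -> closed B).
Proof.
split; first exact: compact_countable_vbox_family.
split; first exact: locally_countable_vbox_family.
split; first exact: locally_finite_vbox_family.
split; first exact: compact_finite_vbox_family.
exact: vbox_family_closed.
Qed.
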